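(* Let $n\ge0$ and let $\mathcal V$ be a variety with $n+2$ Gumm terms. For every integer $q\ge1$, with $k=(2^{q+1}-2)n$, $\mathcal V$ satisfies $$\alpha(\beta\circ_{2^q+1}\gamma)\subseteq\alpha(\gamma\circ\beta)\circ(\alpha\gamma\circ_k\alpha\beta)\quad\text{and}\quad\alpha(\beta\circ_{2^q+1}\gamma)\subseteq(\alpha\beta\circ_k\alpha\gamma)\circ\alpha(\beta\circ\gamma).$$
   Context: Here $\alpha,\beta,\gamma$ range over congruences of algebras in $\mathcal V$. $\circ$ is relational composition, juxtaposition is intersection. For relations $X,Y$ and $m\ge1$, $X\circ_m Y$ denotes $X\circ Y\circ X\circ\cdots$ with $m$ factors; $X\circ_0Y$ is the identity relation. A variety has $n+2$ Gumm terms if it has ternary terms $p,j_1,\dots,j_{n+1}$ satisfying: $x=j_i(x,y,x)$ for all $i$; $x=p(x,z,z)$; $p(x,x,z)=j_1(x,x,z)$; $j_i(x,z,z)=j_{i+1}(x,z,z)$ for odd $i\le n$; $j_i(x,x,z)=j_{i+1}(x,x,z)$ for even $i\le n$; $j_{n+1}(x,y,z)=z$. *)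

From mathcomp Require Import all_boot.
Set Implicit Arguments. Unset Strict Implicit. Unset Printing Implicit Defensive.

Record signature := Signature { op_sym :> Type; arity : op_sym -> nat }.

Inductive term (s : signature) (X : Type) : Type :=
| Var : X -> term s X
| App : forall o : s, ('I_(arity o) -> term s X) -> term s X.
Arguments Var {s X} _.
Arguments App {s X} _ _.

Record algebra (s : signature) := Algebra {
  carrier :> Type;
  interp : forall o : s, ('I_(arity o) -> carrier) -> carrier }.

Fixpoint eval (s : signature) (A : algebra s) (X : Type) (env : X -> A)
    (t : term s X) : A :=
  match t with
  | Var x => env x
  | App o args => @interp s A o (fun i => eval env (args i))
  end.

Definition identity (s : signature) := (term s nat * term s nat)%type.
Definition satisfies (s : signature) (A : algebra s) (e : identity s) : Prop :=
  forall env : nat -> A, eval env e.1 = eval env e.2.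

(** A variety is presented by a set of identities [Sigma] (Birkhoff);
    its members are the models of [Sigma]. *)
Definition in_variety (s : signature) (Sigma : identity s -> Prop)
    (A : algebra s) : Prop :=
  forall e, Sigma e -> satisfies A e.

Definition term3 (s : signature) := term s 'I_3.

Definition top3 (s : signature) (A : algebra s) (t : term3 s) (a b c : A) : A :=
  eval (fun i : 'I_3 => match val i with 0 => a | 1 => b | _ => c end) t.

Definition gumm_identities (s : signature) (A : algebra s) (n : nat)
    (p : term3 s) (j : nat -> term3 s) : Prop :=
  (forall i, 1 <= i <= n.+1 -> forall x y : A, top3 (j i) x y x = x) /\
  (forall x z : A, top3 p x z z = x) /\
  (forall x z : A, top3 p x x z = top3 (j 1) x x z) /\
  (forall i, 1 <= i <= n -> odd i ->
     forall x z : A, top3 (j i) x z z = top3 (j i.+1) x z z) /\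
  (forall i, 1 <= i <= n -> ~~ odd i ->
     forall x z : A, top3 (j i) x x z = top3 (j i.+1) x x z) /\
  (forall x y z : A, top3 (j n.+1) x y z = z).

Definition has_gumm_terms (s : signature) (Sigma : identity s -> Prop)
    (n : nat) : Prop :=
  exists (p : term3 s) (j : nat -> term3 s),
    forall A : algebra s, in_variety Sigma A -> gumm_identities A n p j.

Definition relation (T : Type) := T -> T -> Prop.

Definition rcomp (T : Type) (X Y : relation T) : relation T :=
  fun a c => exists b, X a b /\ Y b c.

Definition rint (T : Type) (X Y : relation T) : relation T :=
  fun a b => X a b /\ Y a b.

Definition rsub (T : Type) (X Y : relation T) : Prop :=
  forall a b, X a b -> Y a b.

(** [rcompn X Y m] = X o Y o X o ... with m factors; m = 0 gives identity. *)
Fixpoint rcompn (T : Type) (X Y : relation T) (m : nat) : relation T :=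
  match m with
  | 0 => fun a b => a = b
  | 1 => X
  | m'.+1 => rcomp X (rcompn Y X m')
  end.

Definition is_congruence (s : signature) (A : algebra s) (R : relation A) : Prop :=
  [/\ (forall a, R a a),
      (forall a b, R a b -> R b a),
      (forall a b c, R a b -> R b c -> R a c) &
      (forall (o : s) (u v : 'I_(arity o) -> A),
         (forall i, R (u i) (v i)) -> R (@interp s A o u) (@interp s A o v))].

From mathcomp Require Import all_boot zify.
Set Implicit Arguments. Unset Strict Implicit. Unset Printing Implicit Defensive.

(* Let (a, d) be in alpha and x_0 = a, ..., x_(2t+1) = d a beta/gamma-chain.
   Folding the chain about its middle link with p(a, x_(t+1-s), x_(t+s)) joins a
   to f = j_1(a, x_1, d) by an alternating chain of length t + 1. Sliding the
   middle argument of j_i(a, -, d) along the chain, forwards for odd i and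
   backwards for even i, and switching from j_i to j_(i+1) at the end by the Gumm
   identities, joins f to j_(n+1)(a, -, d) = d by n blocks of length 2t; these
   points stay in the alpha-class of a because j_i(a, y, a) = a. For t = 2^q the
   head chain has length 2^q + 1, so the first inclusion follows by induction on
   q, and the second is its converse. *)

Definition alt (T : Type) (X Y : relation T) (i : nat) : relation T :=
  if odd i then Y else X.

Definition chain (T : Type) (R : nat -> relation T) (m : nat) (a b : T) : Prop :=
  exists x : nat -> T, [/\ x 0 = a, x m = b & forall i, i < m -> R i (x i) (x i.+1)].

Lemma alt_succ (T : Type) (X Y : relation T) i : alt X Y i.+1 = alt Y X i.
Proof. by rewrite /alt /= if_neg. Qed.

Lemma alt_add (T : Type) (X Y : relation T) m i :
  alt X Y (m + i) = alt (alt X Y m) (alt Y X m) i.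
Proof. by rewrite /alt oddD; case: (odd m); case: (odd i). Qed.

Lemma alt_rint (T : Type) (Z X Y : relation T) i :
  alt (rint Z X) (rint Z Y) i = rint Z (alt X Y i).
Proof. by rewrite /alt; case: (odd i). Qed.

Lemma alt_sym (T : Type) (X Y : relation T) i u v :
  (forall u v, X u v -> X v u) -> (forall u v, Y u v -> Y v u) ->
  alt X Y i u v -> alt X Y i v u.
Proof. by rewrite /alt; case: (odd i) => symX symY; [apply: symY|apply: symX]. Qed.

Lemma rint_sym (T : Type) (X Y : relation T) u v :
  (forall u v, X u v -> X v u) -> (forall u v, Y u v -> Y v u) ->
  rint X Y u v -> rint X Y v u.
Proof. by move=> symX symY [Xuv Yuv]; split; [apply: symX|apply: symY]. Qed.

Lemma alt_congruence (s : signature) (A : algebra s) (X Y : relation A) i :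
  is_congruence X -> is_congruence Y -> is_congruence (alt X Y i).
Proof. by rewrite /alt; case: (odd i). Qed.

Lemma rcompn_chain (T : Type) (X Y : relation T) m a b :
  rcompn X Y m a b <-> chain (alt X Y) m a b.
Proof.
elim: m X Y a b => [|m IH] X Y a b.
  split=> [->|[x [<- <- _]]] //; by exists (fun _ => b).
case: m IH => [|m] IH.
  split=> [Hab|[x [<- <- /(_ 0 isT) //]]].
  by exists (fun i => if i is 0 then a else b); split=> // -[].
change (rcomp X (rcompn Y X m.+1) a b <-> chain (alt X Y) m.+2 a b).
split=> [[c [Hac /IH [x [x0 xm Hx]]]]|[x [x0 xm Hx]]].
  exists (fun i => if i is i'.+1 then x i' else a); split=> // -[|i] Hi /=.
    by rewrite x0.
  by rewrite alt_succ; exact: Hx.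
exists (x 1); split; first by have := Hx 0 isT; rewrite x0.
apply/IH; exists (fun i => x i.+1); split=> // i Hi.
by rewrite -alt_succ; exact: Hx.
Qed.

Lemma chain_map (T U : Type) (R : nat -> relation T) (R' : nat -> relation U)
    (F : T -> U) m a b :
  (forall i u v, i < m -> R i u v -> R' i (F u) (F v)) ->
  chain R m a b -> chain R' m (F a) (F b).
Proof.
move=> HF [x [<- <- Hx]]; exists (F \o x); split=> // i Hi.
exact/HF/Hx.
Qed.

Lemma chain_cat (T : Type) (R : nat -> relation T) m1 m2 a b c :
  chain R m1 a b -> chain (fun i => R (m1 + i)) m2 b c -> chain R (m1 + m2) a c.
Proof.
move=> [x [x0 xm Hx]] [y [y0 ym Hy]].
exists (fun i => if i <= m1 then x i else y (i - m1)); split=> [||i Hi] //.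
  case: (leqP (m1 + m2) m1) => [H|_]; last by rewrite addKn.
  have m20 : m2 = 0 by lia.
  by rewrite m20 addn0 xm -y0 -ym m20.
case: (ltnP i m1) => [lt_im1|le_m1i]; first by rewrite ltnW //; exact: Hx.
move: Hi; rewrite -(subnKC le_m1i); case: (i - m1) => [|k].
  rewrite addn0 leqnn xm -y0 subSnn -{1}[m1]addn0 ltn_add2l => /Hy.
  by rewrite addn0.
have -> : (m1 + k.+1 <= m1) = false by lia.
by rewrite ltn_add2l -addnS !addKn; exact: Hy.
Qed.

Lemma chain_rev (T : Type) (R R' : nat -> relation T) m a b :
  (forall i u v, i < m -> R (m.-1 - i) u v -> R' i v u) ->
  chain R m a b -> chain R' m b a.
Proof.
move=> HR [x [<- <- Hx]]; exists (fun i => x (m - i)).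
split=> [||i Hi]; rewrite ?subn0 ?subnn //.
apply: HR => //; have -> : m - i = (m.-1 - i).+1 by lia.
have -> : m - i.+1 = m.-1 - i by lia.
apply: Hx; lia.
Qed.

Lemma chain_alt_cat (T : Type) (X Y : relation T) m1 m2 a b c :
  ~~ odd m1 -> chain (alt X Y) m1 a b -> chain (alt X Y) m2 b c ->
  chain (alt X Y) (m1 + m2) a c.
Proof.
move=> ev H1 H2; apply: chain_cat H1 _; apply: (chain_map (F := id)) H2 => i u v _.
by rewrite alt_add /alt (negbTE ev).
Qed.

Lemma rcompn_cat (T : Type) (X Y : relation T) m1 m2 a b c :
  ~~ odd m1 -> rcompn X Y m1 a b -> rcompn X Y m2 b c -> rcompn X Y (m1 + m2) a c.
Proof.
move=> ev /rcompn_chain H1 /rcompn_chain H2; apply/rcompn_chain.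
exact: chain_alt_cat ev H1 H2.
Qed.

Lemma rcompn_converse (T : Type) (X Y : relation T) m a b :
  (forall u v, X u v -> X v u) -> (forall u v, Y u v -> Y v u) ->
  rcompn X Y m a b -> rcompn (alt Y X m) (alt X Y m) m b a.
Proof.
move=> symX symY /rcompn_chain H; apply/rcompn_chain.
apply: chain_rev H => i u v Hi.
have -> : alt X Y (m.-1 - i) = alt (alt Y X m) (alt X Y m) i.
  rewrite -alt_add /alt; have -> : odd (m.-1 - i) = ~~ odd (m + i) by lia.
  by case: (odd _).
by apply: alt_sym => {}u {}v; apply: alt_sym.
Qed.

Lemma eval_cong (s : signature) (A : algebra s) (R : relation A) (X : Type)
    (e1 e2 : X -> A) (t : term s X) :
  is_congruence R -> (forall x, R (e1 x) (e2 x)) -> R (eval e1 t) (eval e2 t).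
Proof.
move=> [_ _ _ Rop] He; elim: t => [x|o args IH] /=; first exact: He.
exact: Rop.
Qed.

Lemma top3_cong (s : signature) (A : algebra s) (R : relation A) (t : term3 s)
    (a a' b b' c c' : A) :
  is_congruence R -> R a a' -> R b b' -> R c c' ->
  R (top3 t a b c) (top3 t a' b' c').
Proof. by move=> RC Ra Rb Rc; apply: eval_cong => // -[[|[|k]] Hk]. Qed.

Section Gumm.

Variables (s : signature) (A : algebra s) (n : nat) (p : term3 s) (j : nat -> term3 s).
Hypothesis gumm : gumm_identities A n p j.
Variables alpha beta gamma : relation A.
Hypotheses (Ca : is_congruence alpha) (Cb : is_congruence beta)
  (Cc : is_congruence gamma).

Section FoldChain.

Variables (t : nat) (x : nat -> A).
Hypothesis t_gt0 : 0 < t.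
Hypothesis x_chain : forall i, i < t.*2.+1 -> alt beta gamma i (x i) (x i.+1).
Hypothesis alpha_ends : alpha (x 0) (x t.*2.+1).

Local Notation a := (x 0).
Local Notation d := (x t.*2.+1).
Local Notation J i y := (top3 (j i) a y d).

Lemma x_adjacent e k l :
  odd e = odd (minn k l) -> maxn k l = (minn k l).+1 -> maxn k l <= t.*2.+1 ->
  alt beta gamma e (x k) (x l).
Proof.
move=> par adj le_max; have [_ symR _ _] := alt_congruence e Cb Cc.
have Hm : alt beta gamma e (x (minn k l)) (x (minn k l).+1).
  by rewrite /alt par; apply: x_chain; lia.
case: (leqP k l) => [le_kl|/ltnW le_lk].
  have El : l = k.+1 by lia.
  by subst l; rewrite (minn_idPl le_kl) in Hm.
have Ek : k = l.+1 by lia.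
by subst k; rewrite (minn_idPr le_lk) in Hm; apply: symR.
Qed.

Lemma J_alpha i y : 1 <= i <= n.+1 -> alpha (J i y) a.
Proof.
have [aR aS _ _] := Ca; move=> Hi; rewrite -{2}(gumm.1 i Hi a y).
by apply: top3_cong => //; apply: aS.
Qed.

Lemma J_step i (R : relation A) y z :
  1 <= i <= n.+1 -> is_congruence R -> R y z -> rint alpha R (J i y) (J i z).
Proof.
move=> Hi RC Ryz; have [aR aS aT _] := Ca; have [RR _ _ _] := RC.
split; last exact: top3_cong.
by apply: (aT _ a); [apply: J_alpha|apply/aS/J_alpha].
Qed.

Lemma gumm_head : chain (fun i => alt beta gamma (t + i)) t.+1 a (J 1 (x 1)).
Proof.
have [_ [p_xzz [p_xxz _]]] := gumm.
have refl e u : alt beta gamma e u u by case: (alt_congruence e Cb Cc).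
pose g i := if i == 0 then a else if i <= t then top3 p a (x (t.+1 - i)) (x (t + i))
            else J 1 (x 1).
exists g; split=> [||i Hi]; rewrite /g //=; first by rewrite ltnn.
have C e := alt_congruence e Cb Cc.
case: (eqVneq i 0) => [->|i_gt0] /=.
  rewrite t_gt0 -{1}(p_xzz a (x t.+1)) subSS subn0 addn1.
  by apply: top3_cong (C _) (refl _ _) _ (refl _ _); apply: x_adjacent; lia.
case: (ltnP i t) => [lt_it|le_ti].
  by rewrite ltnW //; apply: top3_cong (C _) (refl _ _) _ _; apply: x_adjacent; lia.
have -> : i = t by lia.
have [_ _ trans _] := C (t + t).
rewrite leqnn subSnn; apply: (trans _ (top3 p a a d)).
  by apply: top3_cong (C _) (refl _ _) _ _; apply: x_adjacent; lia.
rewrite p_xxz.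
by apply: top3_cong (C _) (refl _ _) _ (refl _ _); apply: x_adjacent; lia.
Qed.

Let E i := J i (x (if odd i then 1 else t.*2)).

Lemma J_switch i : 1 <= i <= n ->
  rint alpha beta (J i (x (if odd i then t.*2 else 1)))
                  (J i.+1 (x (if odd i then t.*2 else 1))).
Proof.
have [_ [_ [_ [j_odd [j_even _]]]]] := gumm.
have [aR aS aT _] := Ca; have [bR bS bT _] := Cb.
move=> Hi; split; first by apply: (aT _ a); [apply: J_alpha|apply/aS/J_alpha]; lia.
case: (boolP (odd i)) => oi.
  have Hb : alt beta gamma 0 (x t.*2) d by apply: x_adjacent; lia.
  apply: (bT _ (J i d)); first exact: top3_cong Cb (bR _) Hb (bR _).
  rewrite (j_odd i Hi oi).
  exact: top3_cong Cb (bR _) (bS _ _ Hb) (bR _).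
have Hb : alt beta gamma 0 (x 1) a by apply: x_adjacent; lia.
apply: (bT _ (J i a)); first exact: top3_cong Cb (bR _) Hb (bR _).
rewrite (j_even i Hi oi).
exact: top3_cong Cb (bR _) (bS _ _ Hb) (bR _).
Qed.

Lemma gumm_block i : 1 <= i <= n ->
  chain (alt (rint alpha gamma) (rint alpha beta)) t.*2 (E i) (E i.+1).
Proof.
move=> Hi.
pose y u := if u < t.*2 then J i (x (if odd i then u.+1 else t.*2 - u)) else E i.+1.
exists y; split=> [||u Hu]; rewrite /y /E ?ltnn //=.
  by rewrite double_gt0 t_gt0 subn0; case: (odd i).
rewrite Hu alt_rint -alt_succ; case: (ltnP u.+1 t.*2) => [lt_u1|le_u1].
  apply: J_step; [lia | exact: alt_congruence |].
  by case: (odd i); apply: x_adjacent; lia.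
have Eu : u.+1 = t.*2 by lia.
have -> : t.*2 - u = 1 by lia.
by rewrite Eu /alt odd_double if_neg; exact: J_switch.
Qed.

Lemma gumm_tail :
  chain (alt (rint alpha gamma) (rint alpha beta)) (t.*2 * n) (J 1 (x 1)) d.
Proof.
have [_ [_ [_ [_ [_ j_last]]]]] := gumm.
have blocks i : i <= n ->
    chain (alt (rint alpha gamma) (rint alpha beta)) (t.*2 * i) (E 1) (E i.+1).
  elim: i => [|i IH] Hi; first by rewrite muln0; exists (fun _ => E 1).
  rewrite mulnS addnC; apply: chain_alt_cat; last exact: gumm_block.
    by rewrite oddM odd_double.
  by apply: IH; lia.
by have := blocks n (leqnn n); rewrite /E /= j_last.
Qed.

Lemma gumm_fold : exists2 f,
  rint alpha (rcompn (alt beta gamma t) (alt gamma beta t) t.+1) a f &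
  rcompn (rint alpha gamma) (rint alpha beta) (t.*2 * n) f d.
Proof.
exists (J 1 (x 1)); last exact/rcompn_chain/gumm_tail.
split; first by have [_ aS _ _] := Ca; apply/aS/J_alpha.
apply/rcompn_chain; apply: (chain_map (F := id)) gumm_head => i u v _ /=.
by rewrite -alt_add.
Qed.

End FoldChain.

Lemma gumm_split t : 0 < t ->
  rsub (rint alpha (rcompn beta gamma t.*2.+1))
       (rcomp (rint alpha (rcompn (alt beta gamma t) (alt gamma beta t) t.+1))
              (rcompn (rint alpha gamma) (rint alpha beta) (t.*2 * n))).
Proof.
move=> t_gt0 a d [Had /rcompn_chain [x [x0 xm Hx]]].
have [|f Haf Hfd] := gumm_fold t_gt0 Hx; first by rewrite x0 xm.
by exists f; rewrite -x0 -xm.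
Qed.

Lemma gumm_left q :
  rsub (rint alpha (rcompn beta gamma (2 ^ q.+1).+1))
       (rcomp (rint alpha (rcomp gamma beta))
              (rcompn (rint alpha gamma) (rint alpha beta) ((2 ^ q.+2 - 2) * n))).
Proof.
elim: q => [|q IH]; first exact: (gumm_split (t := 1)).
set u := 2 ^ q.+1; have u_gt0 : 0 < u by rewrite expn_gt0.
have u_even : ~~ odd u by rewrite oddX.
have e2 : 2 ^ q.+2 = u.*2 by rewrite expnS mul2n.
have e3 : 2 ^ q.+3 = u.*2.*2 by rewrite expnS e2 mul2n.
rewrite e2 in IH; rewrite e3 e2.
move=> a d /(gumm_split u_gt0) [f [[Haf]]].
rewrite /alt (negbTE u_even) => /(conj Haf)/IH [g [Hag Hgf]] Hfd.
exists g; split => //.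
have -> : (u.*2.*2 - 2) * n = (u.*2 - 2) * n + u.*2 * n.
  by rewrite -mulnDl; congr (_ * n); lia.
by apply: rcompn_cat Hgf Hfd; rewrite oddM; apply/nandP; left; lia.
Qed.

Lemma gumm_right q :
  rsub (rint alpha (rcompn beta gamma (2 ^ q.+1).+1))
       (rcomp (rcompn (rint alpha beta) (rint alpha gamma) ((2 ^ q.+2 - 2) * n))
              (rint alpha (rcomp beta gamma))).
Proof.
have [_ aS _ _] := Ca; have [_ bS _ _] := Cb; have [_ cS _ _] := Cc.
have symI R (RC : is_congruence R) u v : rint alpha R u v -> rint alpha R v u.
  by case: RC => _ rS _ _; apply: rint_sym.
move=> a d [Had Hch].
have Hda : rint alpha (rcompn beta gamma (2 ^ q.+1).+1) d a.
  split; first exact: aS.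
  by have := rcompn_converse bS cS Hch; rewrite /alt /= oddX.
have [g [[Hdg [e [Hde Heg]]] Hga]] := gumm_left Hda.
exists g; split.
  have := rcompn_converse (symI _ Cc) (symI _ Cb) Hga.
  by rewrite /alt oddM expnS mul2n (_ : odd (_ .*2 - 2) = false) //; lia.
by split; [exact: aS | exists e; split; [exact: bS | exact: cS]].
Qed.

End Gumm.

Theorem theorem4p7 (s : signature) (Sigma : identity s -> Prop) (n : nat) :
  has_gumm_terms Sigma n ->
  forall q : nat, 1 <= q ->
  forall (A : algebra s), in_variety Sigma A ->
  forall alpha beta gamma : relation A,
    is_congruence alpha -> is_congruence beta -> is_congruence gamma ->
    let k := ((2 ^ q.+1 - 2) * n)%N in
    rsub (rint alpha (rcompn beta gamma (2 ^ q).+1))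
         (rcomp (rint alpha (rcomp gamma beta))
                (rcompn (rint alpha gamma) (rint alpha beta) k)) /\
    rsub (rint alpha (rcompn beta gamma (2 ^ q).+1))
         (rcomp (rcompn (rint alpha beta) (rint alpha gamma) k)
                (rint alpha (rcomp beta gamma))).
Proof.
move=> [p [j gumm]] [//|q] _ A A_in alpha beta gamma Ca Cb Cc k.
have G := gumm A A_in.
by split; [exact: (gumm_left G Ca Cb Cc) | exact: (gumm_right G Ca Cb Cc)].
Qed.
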